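(* Let $n=3$ and let $l_1,l_2,l_3,l_\infty$ be nonnegative integers. Two diagrams $x,y\in X(l_1,l_2,l_3,l_\infty)$ lie in the same $J_3$-orbit if and only if they have the same border thickness.
   Context: Cactus group: $J_n$ is the group generated by $s_{p,q}$, $1\le p<q\le n$, subject to the relations $s_{p,q}^2=e$; $s_{p,q}s_{p',q'}=s_{p',q'}s_{p,q}$ if $[p,q]$ and $[p',q']$ are disjoint; $s_{p,q}s_{p',q'}s_{p,q}=s_{p+q-q',p+q-p'}$ if $p\le p'<q'\le q$. Arc diagrams: fix nonnegative integers $l_1,\dots,l_n,l_\infty$. On the boundary circle of a closed disc place $n+1$ marked positions: position $0$ (occupied by $z_\infty$) and positions $1,\dots,n$ following it clockwise. An arc diagram is a bijective assignment of labels $z_1,\dots,z_n$ to positions $1,\dots,n$ together with a finite collection of simple arcs in the disc, pairwise disjoint except at endpoints, each joining two distinct marked points, such that $z_j$ is an endpoint of exactly $l_j$ arcs ($j\in\{1,\dots,n,\infty\}$; $l_j$ is the valence). Parallel arcs are allowed; diagrams are up to isotopy, equivalently determined by the labelling and the number of arcs between each pair of marked points. $X(l_1,\dots,l_n,l_\infty)$ is the set of such diagrams. Action: $s_{p,q}$ ($1\le p<q\le n$) acts by cutting off positions $p,\dots,q$ with a chord $\ell$ (arcs isotoped to cross $\ell$ at most once), reflecting that region by the reflection reversing $\ell$ (label at position $p+t$ goes to position $q-t$, crossing points on $\ell$ reversed), leaving the rest unchanged and reconnecting arcs at $\ell$. Words act right to left; this is an action of $J_n$. Border thickness: the minimum,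 over the $n+1$ cyclically adjacent pairs of positions $(0,1),(1,2),\dots,(n-1,n),(n,0)$, of the number of arcs joining the two points of the pair. *)

(* Arc diagrams on a disc with n+1 marked boundary positions
   0,1,...,n (clockwise), position 0 carrying z_infinity. *)
From Stdlib Require Import Relations.
From mathcomp Require Import all_boot.
Set Implicit Arguments. Unset Strict Implicit. Unset Printing Implicit Defensive.

(* Raw data of a diagram:
   - [lab i] = index of the label sitting at position i
     (label index 0 stands for z_infinity, label index j>=1 for z_j);
   - [arcs (i,j)] = number of arcs joining the marked points at positions i,j. *)
Record diagram (n : nat) := Diagram {
  lab  : {ffun 'I_n.+1 -> 'I_n.+1};
  arcs : {ffun 'I_n.+1 * 'I_n.+1 -> nat} }.

(* Membership in X(l_1,...,l_n,l_infty); [v k] is the valence of label k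
   (v 0 = l_infty, v j = l_j). *)
Definition wf (n : nat) (v : 'I_n.+1 -> nat) (x : diagram n) : Prop :=
  [/\ injective (lab x) /\ lab x ord0 = ord0,
      (forall i, arcs x (i, i) = 0),
      (forall i j, arcs x (i, j) = arcs x (j, i)),
      (* arcs are pairwise disjoint except at endpoints: no crossing chords *)
      (forall a b c d : 'I_n.+1, a < b -> b < c -> c < d ->
          arcs x (a, c) = 0 \/ arcs x (b, d) = 0)
    & (forall i, \sum_(j : 'I_n.+1) arcs x (i, j) = v (lab x i))].

Definition border (n : nat) (x : diagram n) : nat :=
  \big[minn/arcs x (ord0, ordS ord0)]_(i : 'I_n.+1) arcs x (i, ordS i).

Section Action.
Variables (n p q : nat) (x : diagram n).

(* positions p..q are cut off by the chord l *)
Definition inside (i : 'I_n.+1) : bool := (p <= i) && (i <= q).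
Definition refl (i : 'I_n.+1) : 'I_n.+1 := inord (p + q - i).

(* number of arcs crossing l with inside endpoint at position i *)
Definition cin (i : nat) : nat :=
  \sum_(o : 'I_n.+1 | ~~ inside o) arcs x (inord i, o).
(* number of arcs crossing l with outside endpoint at position o *)
Definition cout (o : nat) : nat :=
  \sum_(i : 'I_n.+1 | inside i) arcs x (i, inord o).

(* Crossing points on l, listed from the end A of l (between positions p-1
   and p) to the end B (between q and q+1).  Before reflection the inside
   endpoints appear in increasing position order; the outside endpoints appear
   in the order p-1, p-2, ..., 0, n, n-1, ..., q+1.  After reflecting the
   inside region (l reversed), the inside endpoint sequence (in new positions)
   is the following. *)
Definition new_inside_seq : seq nat :=
  flatten [seq nseq (cin (p + q - i)) i | i <- iota p (q - p).+1].
Definition outside_seq : seq nat :=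
  flatten [seq nseq (cout o) o | o <- rev (iota 0 p) ++ rev (iota q.+1 (n - q))].
(* reconnection at l : k-th crossing point inside glued to k-th outside *)
Definition reconnected : seq (nat * nat) := zip new_inside_seq outside_seq.

Definition act_arcs (e : 'I_n.+1 * 'I_n.+1) : nat :=
  let: (i, j) := e in
  if inside i && inside j then arcs x (refl i, refl j)
  else if ~~ inside i && ~~ inside j then arcs x (i, j)
  else if inside i then count_mem (val i, val j) reconnected
  else count_mem (val j, val i) reconnected.

Definition act_lab (i : 'I_n.+1) : 'I_n.+1 :=
  if inside i then lab x (refl i) else lab x i.

Definition act : diagram n := Diagram [ffun i => act_lab i] [ffun e => act_arcs e].
End Action.

Definition step (n : nat) (v : 'I_n.+1 -> nat) (x y : diagram n) : Prop :=
  wf v x /\ wf v y /\ exists p q, [/\ 1 <= p, p < q, q <= n & y = act p q x].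

Definition same_orbit (n : nat) (v : 'I_n.+1 -> nat) : relation (diagram n) :=
  clos_refl_sym_trans (diagram n) (step v).

Definition valence3 (l1 l2 l3 linf : nat) (k : 'I_4) : nat :=
  nth 0 [:: linf; l1; l2; l3] k.

From Stdlib Require Import Relations.
From mathcomp Require Import all_boot zify.
Set Implicit Arguments. Unset Strict Implicit. Unset Printing Implicit Defensive.

(* A diagram with three labelled points is its label permutation together with six arc
   numbers [A .. F]; planarity forces [B = 0] or [E = 0].  The
   generators [s12], [s23], [s13] permute the labels freely, so it suffices to compare
   diagrams with identical labels.  Then the valences fix all row sums, hence [B] and [E],
   and leave one free integer parameter [t]: [A] and [F] grow with [t] while [C] and [D]
   shrink.  The border thickness [min (min A F) (min C D)] is therefore a tent function
   of [t], and two diagrams with the same border either coincide or are mirror images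
   across the peak of the tent; the label-preserving word [s13 s12 s23 s12] realises
   exactly this mirror. *)

Notation arc_data := (nat * nat * nat * nat * nat * nat)%type.

(* [(A, B, C, D, E, F)] lists the numbers of arcs joining the positions 01, 02, 03, 12, 13, 23. *)
Definition arc_count (s : arc_data) (i j : nat) : nat :=
  let: (A, B, C, D, E, F) := s in
  match i, j with
  | 0, 1 | 1, 0 => A | 0, 2 | 2, 0 => B | 0, 3 | 3, 0 => C
  | 1, 2 | 2, 1 => D | 1, 3 | 3, 1 => E | 2, 3 | 3, 2 => F | _, _ => 0 end.

Definition arcs_are (x : diagram 3) (s : arc_data) : Prop :=
  forall i j : 'I_4, arcs x (i, j) = arc_count s i j.

Definition arc_data_of (x : diagram 3) : arc_data :=
  (arcs x (inord 0, inord 1), arcs x (inord 0, inord 2), arcs x (inord 0, inord 3),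
   arcs x (inord 1, inord 2), arcs x (inord 1, inord 3), arcs x (inord 2, inord 3)).

Definition noncrossing (s : arc_data) : Prop :=
  let: (_, B, _, _, E, _) := s in B = 0 \/ E = 0.

Definition row (s : arc_data) (k : nat) : nat :=
  arc_count s k 0 + arc_count s k 1 + arc_count s k 2 + arc_count s k 3.

Definition min_AF (s : arc_data) : nat := let: (A, _, _, _, _, F) := s in minn A F.
Definition min_CD (s : arc_data) : nat := let: (_, _, C, D, _, _) := s in minn C D.
Definition border_data (s : arc_data) : nat := minn (min_AF s) (min_CD s).

Definition s12_data (s : arc_data) : arc_data :=
  let: (A, B, C, D, E, F) := s in
  let m := minn (B + F) (A + B) in (m, A + B - m, C, D, B + F - m, E + F - (B + F - m)).
Definition s23_data (s : arc_data) : arc_data :=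
  let: (A, B, C, D, E, F) := s in
  let m := minn (C + E) (D + E) in (A, C + E - m, B + C - (C + E - m), m, D + E - m, F).
Definition s13_data (s : arc_data) : arc_data :=
  let: (A, B, C, D, E, F) := s in (C, B, A, F, E, D).

(* For the three generators of [J_3] only: [(1,2)], [(1,3)] and [(2,3)]. *)
Definition act_data (p q : nat) : arc_data -> arc_data :=
  if p == 2 then s23_data else if q == 2 then s12_data else s13_data.

Definition gen3 (g : nat * nat) : bool := [&& g.2 <= 3, 0 < g.1 & g.1 < g.2].

Ltac case_ord4 i := let H := fresh "H" in case: i => [[|[|[|[|i]]]] H] //.

Lemma arcs_are_data_of x :
  (forall i, arcs x (i, i) = 0) -> (forall i j, arcs x (i, j) = arcs x (j, i)) ->
  arcs_are x (arc_data_of x).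
Proof.
move=> hdiag hsym i j.
have ordE k (hk : k < 4) : Ordinal hk = inord k by apply/val_inj; rewrite /= inordK.
case_ord4 i; case_ord4 j; rewrite /arc_data_of /= !ordE //; by rewrite ?hdiag ?hsym.
Qed.

Lemma arcs_are_eq x y s : arcs_are x s -> arcs_are y s -> lab x = lab y -> x = y.
Proof.
case: x => lx ax; case: y => ly ay /= hx hy hl; subst.
by congr Diagram; apply/ffunP => -[i j]; rewrite hx hy.
Qed.

Lemma sum_arcs x s (i : 'I_4) : arcs_are x s -> \sum_j arcs x (i, j) = row s i.
Proof. by move=> hs; rewrite !big_ord_recl big_ord0 /= !hs /row /bump /= addn0 !addnA. Qed.

Lemma border_arcs x s : arcs_are x s -> border x = border_data s.
Proof.
case: s => [[[[[A B] C] D] E] F] hs.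
rewrite /border !big_ord_recl big_ord0 /= !hs /border_data /=; lia.
Qed.

Lemma wf_arcsP v x s : arcs_are x s ->
  wf v x <-> [/\ injective (lab x), lab x ord0 = ord0, noncrossing s
               & forall i : 'I_4, row s i = v (lab x i)].
Proof.
case: s => [[[[[A B] C] D] E] F] hs; split.
- case=> [[hinj h0] _ _ hnc hv]; split => // [|i]; last by rewrite -hv (sum_arcs _ hs).
  have := hnc (inord 0) (inord 1) (inord 2) (inord 3).
  by rewrite !inordK // !hs !inordK //=; apply.
- case=> hinj h0 hnc hv; split => //.
  + by move=> i; rewrite hs; case_ord4 i.
  + by move=> i j; rewrite !hs; case_ord4 i; case_ord4 j.
  + by move=> a b c d; rewrite !hs; case_ord4 a; case_ord4 b; case_ord4 c; case_ord4 d.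
  + by move=> i; rewrite (sum_arcs _ hs) hv.
Qed.

Definition act_pos n p q (i : 'I_n.+1) : 'I_n.+1 := if inside p q i then refl p q i else i.
Definition refl_pos (p q k : nat) : nat := if (p <= k) && (k <= q) then p + q - k else k.

Lemma act_pos_val n p q (i : 'I_n.+1) : q <= n -> act_pos p q i = refl_pos p q i :> nat.
Proof.
move=> hq; rewrite /act_pos /inside /refl /refl_pos; case: ifP => // /andP[] *.
by rewrite inordK; lia.
Qed.

Lemma act_posK n p q : q <= n -> involutive (@act_pos n p q).
Proof.
move=> hq i; apply: ord_inj; rewrite !act_pos_val // /refl_pos.
case h: ((p <= i) && (i <= q)); rewrite ?h //.
by move/andP: h => -[hp hiq]; rewrite ifT; lia.
Qed.

Lemma lab_act n p q (x : diagram n) i : lab (act p q x) i = lab x (act_pos p q i).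
Proof. by rewrite ffunE /act_lab /act_pos; case: ifP. Qed.

Lemma zip_nseq T U n (a : T) (b : U) : zip (nseq n a) (nseq n b) = nseq n (a, b).
Proof. by elim: n => //= n ->. Qed.

Lemma count_zip_blocks (T U : eqType) (i1 i2 : T) (o1 o2 : U) a b c d :
  i1 != i2 -> o1 != o2 -> a + b = c + d ->
  let Z := zip (nseq a i1 ++ nseq b i2) (nseq c o1 ++ nseq d o2) in
  [/\ count_mem (i1, o1) Z = minn a c, count_mem (i1, o2) Z = a - minn a c,
      count_mem (i2, o1) Z = c - minn a c & count_mem (i2, o2) Z = d - (a - minn a c)].
Proof.
move=> hi ho hs /=.
have hi' : i2 != i1 by rewrite eq_sym.
have ho' : o2 != o1 by rewrite eq_sym.
have zip3 k l m n1 n2 n3 (e1 : k = n1) (e2 : l = n2) (e3 : m = n3) t1 t2 t3 u1 u2 u3 :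
    zip (nseq k t1 ++ nseq l t2 ++ nseq m t3) (nseq n1 u1 ++ nseq n2 u2 ++ nseq n3 u3) =
    nseq k (t1, u1) ++ nseq l (t2, u2) ++ nseq m (t3, u3) :> seq (T * U).
  by subst; rewrite !zip_cat ?size_nseq // !zip_nseq.
case: (leqP a c) => hac; [
  rewrite -(subnKC hac) nseqD -catA (_ : b = c - a + d) ?nseqD -?catA; last lia |
  rewrite -(subnKC (ltnW hac)) nseqD -catA (_ : d = a - c + b) ?nseqD -?catA; last lia ];
  rewrite zip3 // !count_cat !count_nseq /= !xpair_eqE !eqxx /=;
  by rewrite (negbTE hi) (negbTE ho) (negbTE hi') (negbTE ho') /=; split; lia.
Qed.

Ltac crossing_count hs :=
  rewrite /cin /cout big_mkcond /= !big_ord_recl big_ord0 /= !hs !inordK //= /bump /=; lia.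

Lemma reconnected12 x A B C D E F : arcs_are x (A, B, C, D, E, F) ->
  reconnected 1 2 x = zip (nseq (B + F) 1 ++ nseq (A + E) 2) (nseq (A + B) 0 ++ nseq (E + F) 3).
Proof.
move=> hs; rewrite /reconnected /new_inside_seq /outside_seq /= !cats0.
have -> : cin 1 2 x (1 + 2 - 1) = B + F by crossing_count hs.
have -> : cin 1 2 x (1 + 2 - 2) = A + E by crossing_count hs.
have -> : cout 1 2 x 0 = A + B by crossing_count hs.
by have -> : cout 1 2 x 3 = E + F by crossing_count hs.
Qed.

Lemma reconnected23 x A B C D E F : arcs_are x (A, B, C, D, E, F) ->
  reconnected 2 3 x = zip (nseq (C + E) 2 ++ nseq (B + D) 3) (nseq (D + E) 1 ++ nseq (B + C) 0).
Proof.
move=> hs; rewrite /reconnected /new_inside_seq /outside_seq /= !cats0.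
have -> : cin 2 3 x (2 + 3 - 2) = C + E by crossing_count hs.
have -> : cin 2 3 x (2 + 3 - 3) = B + D by crossing_count hs.
have -> : cout 2 3 x 1 = D + E by crossing_count hs.
by have -> : cout 2 3 x 0 = B + C by crossing_count hs.
Qed.

Lemma reconnected13 x A B C D E F : arcs_are x (A, B, C, D, E, F) ->
  reconnected 1 3 x = nseq C (1, 0) ++ nseq B (2, 0) ++ nseq A (3, 0).
Proof.
move=> hs; rewrite /reconnected /new_inside_seq /outside_seq /= !cats0.
have -> : cin 1 3 x (1 + 3 - 1) = C by crossing_count hs.
have -> : cin 1 3 x (1 + 3 - 2) = B by crossing_count hs.
have -> : cin 1 3 x (1 + 3 - 3) = A by crossing_count hs.
have -> : cout 1 3 x 0 = C + B + A by crossing_count hs.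
by rewrite -addnA !nseqD !zip_cat ?size_nseq // !zip_nseq.
Qed.

Lemma arcs_act12 x s : arcs_are x s -> arcs_are (act 1 2 x) (s12_data s).
Proof.
case: s => [[[[[A B] C] D] E] F] hs i j; rewrite ffunE /= (reconnected12 hs).
have [h1 h2 h3 h4] := @count_zip_blocks _ _ 1 2 0 3 (B + F) (A + E) (A + B) (E + F) isT isT ltac:(lia).
by case_ord4 i; case_ord4 j; rewrite /act_arcs /inside /refl /= ?hs ?inordK //= ?h1 ?h2 ?h3 ?h4.
Qed.

Lemma arcs_act23 x s : arcs_are x s -> arcs_are (act 2 3 x) (s23_data s).
Proof.
case: s => [[[[[A B] C] D] E] F] hs i j; rewrite ffunE /= (reconnected23 hs).
have [h1 h2 h3 h4] := @count_zip_blocks _ _ 2 3 1 0 (C + E) (B + D) (D + E) (B + C) isT isT ltac:(lia).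
by case_ord4 i; case_ord4 j; rewrite /act_arcs /inside /refl /= ?hs ?inordK //= ?h1 ?h2 ?h3 ?h4.
Qed.

Lemma arcs_act13 x s : arcs_are x s -> arcs_are (act 1 3 x) (s13_data s).
Proof.
case: s => [[[[[A B] C] D] E] F] hs i j; rewrite ffunE /= (reconnected13 hs).
case_ord4 i; case_ord4 j; rewrite /act_arcs /inside /refl /= ?hs ?inordK //=.
all: by rewrite !count_cat !count_nseq /= !mul0n ?mul1n ?addn0.
Qed.

Lemma arcs_act p q x s : gen3 (p, q) -> arcs_are x s -> arcs_are (act p q x) (act_data p q s).
Proof.
rewrite /gen3 /act_data /=.
case: p => [|[|[|p]]] //; case: q => [|[|[|[|q]]]] //= _.
- exact: arcs_act12.
- exact: arcs_act13.
- exact: arcs_act23.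
Qed.

Lemma act_data_noncrossing p q s : noncrossing s -> noncrossing (act_data p q s).
Proof.
case: s => [[[[[A B] C] D] E] F]; rewrite /act_data.
by case: ifP => _; [|case: ifP => _]; rewrite /=; lia.
Qed.

Lemma row_act_data p q s k : gen3 (p, q) -> row (act_data p q s) k = row s (refl_pos p q k).
Proof.
case: s => [[[[[A B] C] D] E] F]; rewrite /gen3 /act_data /refl_pos /=.
case: p => [|[|[|p]]] //; case: q => [|[|[|[|q]]]] //= _.
all: by case: k => [|[|[|[|k]]]]; rewrite /row /=; lia.
Qed.

Lemma border_act_data p q s : noncrossing s -> border_data (act_data p q s) = border_data s.
Proof.
case: s => [[[[[A B] C] D] E] F]; rewrite /act_data /border_data.
by case: ifP => _; [|case: ifP => _]; rewrite /=; lia.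
Qed.

Definition act_word (w : seq (nat * nat)) (x : diagram 3) : diagram 3 :=
  foldr (fun g y => act g.1 g.2 y) x w.
Definition act_data_word (w : seq (nat * nat)) (s : arc_data) : arc_data :=
  foldr (fun g t => act_data g.1 g.2 t) s w.

Lemma arcs_act_word w x s :
  all gen3 w -> arcs_are x s -> arcs_are (act_word w x) (act_data_word w s).
Proof. by move=> + hs; elim: w => //= -[p q] w IH /andP[g /IH]; apply: arcs_act. Qed.

(* This word fixes every label, and exchanges [min_AF] and [min_CD] of a noncrossing diagram. *)
Definition twist_word : seq (nat * nat) := [:: (1, 3); (1, 2); (2, 3); (1, 2)].

Lemma row_twist s k : row (act_data_word twist_word s) k = row s k.
Proof.
rewrite /= !row_act_data // /refl_pos.
by case: k => [|[|[|[|k]]]].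
Qed.

Lemma noncrossing_twist s : noncrossing s -> noncrossing (act_data_word twist_word s).
Proof. by move=> nc; do 4 apply: act_data_noncrossing. Qed.

Lemma min_AF_twist s : noncrossing s -> min_AF (act_data_word twist_word s) = min_CD s.
Proof. by case: s => [[[[[A B] C] D] E] F] /=; lia. Qed.

Section SameRows.
Variables s s' : arc_data.
Hypotheses (nc : noncrossing s) (nc' : noncrossing s').
Hypothesis hrow : forall i : 'I_4, row s i = row s' i.

(* With [B E] fixed, the rows leave one free parameter, which shifts [A F] one way and [C D] the other. *)
Lemma same_rows_arcs : let: (A, B, C, D, E, F) := s in let: (A', B', C', D', E', F') := s' in
  [/\ B' = B, E' = E, A' + C' = A + C, A' + D' = A + D & A' + F = A + F'].
Proof.
move: nc nc' (hrow (@Ordinal 4 0 isT)) (hrow (@Ordinal 4 1 isT)).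
move: (hrow (@Ordinal 4 2 isT)) (hrow (@Ordinal 4 3 isT)).
case: s s' => [[[[[A B] C] D] E] F] [[[[[A' B'] C'] D'] E'] F']; rewrite /row /= => *; split; lia.
Qed.

Lemma same_rows_min_AF : min_AF s = min_AF s' -> s = s'.
Proof.
move: same_rows_arcs; case: s s' => [[[[[A B] C] D] E] F] [[[[[A' B'] C'] D'] E'] F'] /=.
by case=> -> -> *; congr (_, _, _, _, _, _); lia.
Qed.

Lemma same_rows_min_sum : min_AF s + min_CD s = min_AF s' + min_CD s'.
Proof.
move: same_rows_arcs; case: s s' => [[[[[A B] C] D] E] F] [[[[[A' B'] C'] D'] E'] F'] /=.
by case=> _ _ *; lia.
Qed.

End SameRows.

Lemma same_rows_border s s' : noncrossing s -> noncrossing s' ->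
  (forall i : 'I_4, row s i = row s' i) -> border_data s = border_data s' ->
  s' = s \/ s' = act_data_word twist_word s.
Proof.
rewrite /border_data => nc nc' hrow hb.
have [e|e] : min_AF s' = min_AF s \/ min_AF s' = min_CD s.
  by move: (same_rows_min_sum nc nc' hrow); lia.
- by left; apply: esym; apply: same_rows_min_AF.
- right; apply: same_rows_min_AF; [done | exact: noncrossing_twist | | by rewrite min_AF_twist].
  by move=> i; rewrite row_twist hrow.
Qed.

Section Orbit.
Variable v : 'I_4 -> nat.

Lemma wf_arcs_are x : wf v x -> arcs_are x (arc_data_of x).
Proof. by case=> _ hdiag hsym _ _; apply: arcs_are_data_of. Qed.

Lemma wf_act p q x : gen3 (p, q) -> wf v x -> wf v (act p q x).
Proof.
move=> g w; have hs := wf_arcs_are w; have [hinj h0 hnc hrow] := (wf_arcsP v hs).1 w.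
have /and3P[/= hq hp _] := g.
have hK : involutive (@act_pos 3 p q) by exact: act_posK.
apply/(wf_arcsP v (arcs_act g hs)); split.
- by move=> i j; rewrite !lab_act => /hinj /(can_inj hK).
- rewrite lab_act -[RHS]h0; congr (lab x _); apply: ord_inj.
  by rewrite act_pos_val // /refl_pos /=; case: p hp {g hK}.
- exact: act_data_noncrossing.
- by move=> i; rewrite row_act_data // -act_pos_val // hrow lab_act.
Qed.

Lemma same_orbit_act p q x : gen3 (p, q) -> wf v x -> same_orbit v x (act p q x).
Proof.
move=> g w; apply: rst_step; split; [done | split; first exact: wf_act].
by exists p, q; case/and3P: g.
Qed.

Lemma border_act p q x : gen3 (p, q) -> wf v x -> border (act p q x) = border x.
Proof.
move=> g w; have hs := wf_arcs_are w; have [_ _ hnc _] := (wf_arcsP v hs).1 w.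
by rewrite (border_arcs (arcs_act g hs)) (border_arcs hs) border_act_data.
Qed.

Lemma same_orbit_border x y : same_orbit v x y -> border x = border y.
Proof.
elim=> [a b [w [_ [p [q [h1 h2 h3 ->]]]]] | // | // | a b c _ -> _ -> //].
by rewrite border_act //; apply/and3P.
Qed.

Lemma wf_act_word w x : all gen3 w -> wf v x -> wf v (act_word w x).
Proof. by move=> + wx; elim: w => //= -[p q] w IH /andP[g /IH]; apply: wf_act. Qed.

Lemma same_orbit_act_word w x : all gen3 w -> wf v x -> same_orbit v x (act_word w x).
Proof.
move=> + wx; elim: w => [_ | [p q] w IH /= /andP[g hw]]; first exact: rst_refl.
exact: rst_trans (IH hw) (same_orbit_act g (wf_act_word hw wx)).
Qed.

Definition labid (x : diagram 3) : Prop := forall k, k < 4 -> lab x (inord k) = k :> nat.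

Lemma labid_eq x y : labid x -> labid y -> lab x = lab y.
Proof.
move=> hx hy; apply/ffunP => i; apply: ord_inj.
by rewrite -(inord_val i) hx ?hy.
Qed.

Lemma lab_act_inord p q (x : diagram 3) k : q <= 3 -> k < 4 ->
  lab (act p q x) (inord k) = lab x (inord (refl_pos p q k)).
Proof.
move=> hq hk; rewrite lab_act; congr (lab x _); apply: ord_inj.
by rewrite act_pos_val // !inordK // /refl_pos; case: ifP => //; lia.
Qed.

Lemma wf_lab_perm x : wf v x ->
  [seq lab x (inord k) : nat | k <- iota 0 4] \in
    [:: [:: 0; 1; 2; 3]; [:: 0; 2; 1; 3]; [:: 0; 1; 3; 2];
        [:: 0; 3; 2; 1]; [:: 0; 2; 3; 1]; [:: 0; 3; 1; 2]].
Proof.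
case=> [[hinj h0] _ _ _ _].
have lab_neq a b : a < 4 -> b < 4 -> a != b -> lab x (inord a) != lab x (inord b) :> nat.
  move=> ha hb; apply: contra => /eqP /ord_inj /hinj /(congr1 val).
  by rewrite /= !inordK // => ->.
have l0 : lab x (inord 0) = 0 :> nat.
  by rewrite (_ : inord 0 = ord0) ?h0 //; apply: ord_inj; rewrite inordK.
move: (lab_neq 1 2 isT isT isT) (lab_neq 1 3 isT isT isT) (lab_neq 2 3 isT isT isT).
move: (lab_neq 0 1 isT isT isT) (lab_neq 0 2 isT isT isT) (lab_neq 0 3 isT isT isT).
rewrite /= !l0.
move: (ltn_ord (lab x (inord 1))) (ltn_ord (lab x (inord 2))) (ltn_ord (lab x (inord 3))).
case: (nat_of_ord (lab x (inord 1))) => [|[|[|[|?]]]] //.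
all: case: (nat_of_ord (lab x (inord 2))) => [|[|[|[|?]]]] //.
all: by case: (nat_of_ord (lab x (inord 3))) => [|[|[|[|?]]]].
Qed.

Lemma exists_labid_act_word x : wf v x -> exists2 w, all gen3 w & labid (act_word w x).
Proof.
move=> wx; have := wf_lab_perm wx; rewrite /= !inE.
case/orP=> [|/orP[|/orP[|/orP[|/orP[]]]]] /eqP [e0 e1 e2 e3];
  [exists [::] | exists [:: (1, 2)] | exists [:: (2, 3)] | exists [:: (1, 3)]
  | exists [:: (1, 3); (1, 2)] | exists [:: (1, 3); (2, 3)]] => //;
  by case=> [|[|[|[|k]]]] // _; rewrite /= ?lab_act_inord //= ?e0 ?e1 ?e2 ?e3.
Qed.

Lemma labid_twist x : labid x -> labid (act_word twist_word x).
Proof. by move=> lx [|[|[|[|k]]]] // _; rewrite /= !lab_act_inord //= lx. Qed.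

Lemma same_orbit_of_labid_border x y : wf v x -> wf v y -> labid x -> labid y ->
  border x = border y -> same_orbit v x y.
Proof.
move=> wx wy lx ly hb; have hx := wf_arcs_are wx; have hy := wf_arcs_are wy.
have [_ _ ncx rx] := (wf_arcsP v hx).1 wx; have [_ _ ncy ry] := (wf_arcsP v hy).1 wy.
have elab := labid_eq lx ly.
have hrow (i : 'I_4) : row (arc_data_of x) i = row (arc_data_of y) i by rewrite rx ry elab.
rewrite (border_arcs hx) (border_arcs hy) in hb.
case: (same_rows_border ncx ncy hrow hb) => e; rewrite e in hy.
- by rewrite (arcs_are_eq hx hy elab); apply: rst_refl.
- have hz := arcs_act_word (isT : all gen3 twist_word) hx.
  rewrite (arcs_are_eq hy hz (esym (labid_eq (labid_twist lx) ly))).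
  exact: same_orbit_act_word.
Qed.

Lemma exists_labid_same_orbit x : wf v x -> exists y, [/\ same_orbit v x y, wf v y & labid y].
Proof.
by move=> wx; have [w gw lw] := exists_labid_act_word wx; exists (act_word w x);
  split; [exact: same_orbit_act_word | exact: wf_act_word |].
Qed.
End Orbit.

Theorem mainTheorem8 (l1 l2 l3 linf : nat) (x y : diagram 3) :
  wf (valence3 l1 l2 l3 linf) x -> wf (valence3 l1 l2 l3 linf) y ->
  (same_orbit (valence3 l1 l2 l3 linf) x y <-> border x = border y).
Proof.
set v := valence3 l1 l2 l3 linf; move=> wx wy; split; first exact: same_orbit_border.
move=> hb.
have [x' [ox wx' lx]] := exists_labid_same_orbit wx.
have [y' [oy wy' ly]] := exists_labid_same_orbit wy.
have hb' : border x' = border y' by rewrite -(same_orbit_border ox) -(same_orbit_border oy).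
apply: rst_trans ox (rst_trans _ _ _ _ _ _ (rst_sym _ _ _ _ oy)).
exact: same_orbit_of_labid_border.
Qed.
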